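(* Let $(Y^*,Y,X)$ be random variables with $Y^*\in\{0,1\}$ (true, unobserved outcome), $Y\in\{0,1\}$ (observed, possibly misreported outcome) and $X=(\tilde X,Z)\in\mathcal X$, where $\tilde X\in\tilde{\mathcal X}$ and $Z$ takes values in a finite set $\mathcal Z=\{z_1,\dots,z_k\}$. Write $p(x)=\Pr(Y=1\mid X=x)$, $p^*(x)=\Pr(Y^*=1\mid X=x)$, $p(\tilde x,z)=p(x)$ for $x=(\tilde x,z)$, and $$\underline{p}_z(\tilde x)=\inf_{z\in\mathcal Z}p(\tilde x,z),\qquad \bar p_z(\tilde x)=\sup_{z\in\mathcal Z}p(\tilde x,z).$$ Assume: (i) (Exclusion) for every $x=(\tilde x,z)\in\mathcal X$ and $y\in\{0,1\}$, $\Pr(Y=1-y\mid Y^*=y,X=x)=\Pr(Y=1-y\mid Y^*=y,\tilde X=\tilde x)$; (ii) (Degree of misreporting) for every $\tilde x\in\tilde{\mathcal X}$, $\Pr(Y=0\mid Y^*=1,\tilde x)+\Pr(Y=1\mid Y^*=0,\tilde x)\le 1$; (iii) (Boundary condition) for every $\tilde x\in\tilde{\mathcal X}$, $\bar p_z(\tilde x)>0$ and $\underline p_z(\tilde x)<1$. Then for every $x=(\tilde x,z)\in\mathcal X$, $p^*(x)\in[L_1(x),U_1(x)]$, where $$L_1(x)=\frac{p(x)-\underline p_z(\tilde x)}{1-\underline p_z(\tilde x)},\qquad U_1(x)=\frac{p(x)}{\bar p_z(\tilde x)},$$ and these bounds are sharp (no tighter bounds on $p^*(x)$ are implied by the assumptions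 and the distribution of the observed variables $(Y,X)$).
   Context: $Z$ is an instrument affecting the true outcome but not the misreporting probabilities $\Pr(Y=1-y\mid Y^*=y,\cdot)$. Conditioning on $\tilde x$ means conditioning on $\tilde X=\tilde x$. *)

From HB Require Import structures.
From mathcomp Require Import all_boot all_order all_algebra.
Set Implicit Arguments. Unset Strict Implicit. Unset Printing Implicit Defensive.
Import Order.TTheory GRing.Theory Num.Theory.
Local Open Scope ring_scope.

(* For a fixed value x~ of X~, the conditional joint law of
   (Y*, Y, Z) given X~ = x~ is a probability mass function on the finite
   set bool * bool * Z.  An outcome t = ((ystar, y), z):
     t.1.1 = Y*  (true = 1),  t.1.2 = Y,  t.2 = Z.
   Conditioning on X = (x~, z) is conditioning this law on Z = z. *)

Section Defs.
Variables (R : realFieldType) (Z : finType).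

Definition outcome := (bool * bool * Z)%type.
Definition law := outcome -> R.

Definition is_pmf (f : law) : Prop :=
  (forall t, 0 <= f t) /\ \sum_(t : outcome) f t = 1.

Definition Pr (f : law) (A : pred outcome) : R := \sum_(t : outcome | A t) f t.

(* elementary conditional probability Pr(A | B) = Pr(A,B)/Pr(B)
   (MathComp convention: equals 0 when Pr(B) = 0) *)
Definition cPr (f : law) (A B : pred outcome) : R :=
  Pr f [pred t | A t && B t] / Pr f B.

Definition evYs (b : bool) : pred outcome := [pred t | t.1.1 == b].
Definition evY  (b : bool) : pred outcome := [pred t | t.1.2 == b].
Definition evZ  (z : Z)    : pred outcome := [pred t | t.2 == z].
Definition evI (A B : pred outcome) : pred outcome := [pred t | A t && B t].

Definition in_supp (f : law) (z : Z) : Prop := 0 < Pr f (evZ z).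

Definition p (f : law) (z : Z) : R := cPr f (evY true) (evZ z).
Definition pstar (f : law) (z : Z) : R := cPr f (evYs true) (evZ z).

(* inf / sup over z of p(x~, z), z ranging over the support; since p takes
   values in [0,1], the neutral elements 1 (for min) and 0 (for max) do not
   affect the value on a nonempty support. *)
Definition p_low (f : law) : R := \big[Num.min/1]_(z : Z | 0 < Pr f (evZ z)) p f z.
Definition p_up  (f : law) : R := \big[Num.max/0]_(z : Z | 0 < Pr f (evZ z)) p f z.

Definition mis_x (f : law) (y : bool) (z : Z) : R :=
  cPr f (evY (~~ y)) (evI (evYs y) (evZ z)).
Definition mis (f : law) (y : bool) : R := cPr f (evY (~~ y)) (evYs y).

Definition exclusion (f : law) : Prop :=
  forall (z : Z) (y : bool), 0 < Pr f (evI (evYs y) (evZ z)) ->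
    mis_x f y z = mis f y.

Definition degree_misreport (f : law) : Prop := mis f true + mis f false <= 1.

Definition boundary (f : law) : Prop := 0 < p_up f /\ p_low f < 1.

Definition L1 (f : law) (z : Z) : R := (p f z - p_low f) / (1 - p_low f).
Definition U1 (f : law) (z : Z) : R := p f z / p_up f.

Definition same_observed (f g : law) : Prop :=
  forall (y : bool) (z : Z), Pr f (evI (evY y) (evZ z)) = Pr g (evI (evY y) (evZ z)).

End Defs.

(* a full model: a kernel x~ |-> law of (Y*,Y,Z) given X~ = x~,
   satisfying assumptions (i)-(iii) *)
Definition admissible (R : realFieldType) (Xt : Type) (Z : finType)
  (P : Xt -> law R Z) : Prop :=
  forall xt, [/\ is_pmf (P xt), exclusion (P xt), degree_misreport (P xt)
               & boundary (P xt)].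

(* Under exclusion the misreporting rates a = Pr(Y = 0 | Y* = 1, x~) and
   b = Pr(Y = 1 | Y* = 0, x~) do not depend on z, so p(x~, z) = b + (1 - a - b) p*(x~, z)
   for every z.  As 0 <= p* <= 1 and a + b <= 1, every p(x~, z) lies in [b, 1 - a],
   hence b <= inf_z p and sup_z p <= 1 - a; solving the affine relation for p* and
   using these two inequalities gives L1 <= p* <= U1.
   Conversely, any rates a, b >= 0 with a + b < 1 and b <= p <= 1 - a on the support
   are realised by a model satisfying (i)-(iii) with the observed law of (Y, Z), in
   which p* = (p - b) / (1 - a - b); the rates (0, inf_z p) and (1 - sup_z p, 0)
   attain L1 and U1. *)

From HB Require Import structures.
From mathcomp Require Import all_boot all_order all_algebra.
From mathcomp Require Import ring lra.
Import Order.TTheory GRing.Theory Num.Theory.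
Local Open Scope ring_scope.

Section Probabilities.
Local Set Implicit Arguments. Local Unset Strict Implicit.
Variables (R : realFieldType) (Z : finType).
Implicit Types (f : law R Z) (A B : pred (outcome Z)).

Lemma sum_bool_pair (G : bool * bool -> R) :
  \sum_(u : bool * bool) G u =
    G (true, true) + G (true, false) + G (false, true) + G (false, false).
Proof.
rewrite (eq_bigr (fun u => G (u.1, u.2))); last by case.
by rewrite -(pair_bigA _ (fun a b => G (a, b))) /= !big_bool /= addrA.
Qed.

Lemma Pr_sumZ f A : Pr f A = \sum_z Pr f (evI A (evZ z)).
Proof. exact: (partition_big (fun t : outcome Z => t.2) xpredT). Qed.

Lemma Pr_evI_evZ f A z : Pr f (evI A (evZ z)) = \sum_(u | A (u, z)) f (u, z).
Proof.
pose F u z' := if A (u, z') && (z' == z) then f (u, z') else 0.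
rewrite /Pr big_mkcond (eq_bigr (fun t => F t.1 t.2)); last by case.
rewrite -(pair_bigA _ F) [RHS]big_mkcond /=; apply: eq_bigr => u _.
rewrite (bigD1 z) //= /F eqxx andbT big1 ?addr0 // => z' /negbTE ->.
by rewrite andbF.
Qed.

Lemma Pr_YZ f y z : Pr f (evI (evY y) (evZ z)) = f ((true, y), z) + f ((false, y), z).
Proof.
by rewrite Pr_evI_evZ big_mkcond sum_bool_pair /=; case: y; rewrite /= ?addr0 ?add0r.
Qed.

Lemma Pr_YsZ f ys z :
  Pr f (evI (evYs ys) (evZ z)) = f ((ys, true), z) + f ((ys, false), z).
Proof.
by rewrite Pr_evI_evZ big_mkcond sum_bool_pair /=; case: ys; rewrite /= ?addr0 ?add0r.
Qed.

Lemma Pr_flipZ f ys z :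
  Pr f (evI (evY (~~ ys)) (evI (evYs ys) (evZ z))) = f ((ys, ~~ ys), z).
Proof.
have -> : Pr f (evI (evY (~~ ys)) (evI (evYs ys) (evZ z))) =
          Pr f (evI (evI (evY (~~ ys)) (evYs ys)) (evZ z)).
  by apply: eq_bigl => t; exact: andbA.
by rewrite Pr_evI_evZ big_mkcond sum_bool_pair /=; case: ys; rewrite /= ?addr0 ?add0r.
Qed.

Lemma Pr_flip f ys :
  Pr f (evI (evY (~~ ys)) (evYs ys)) = \sum_z f ((ys, ~~ ys), z).
Proof.
rewrite Pr_sumZ; apply: eq_bigr => z _.
by rewrite Pr_evI_evZ big_mkcond sum_bool_pair /=; case: ys; rewrite /= ?addr0 ?add0r.
Qed.

Lemma Pr_Z_Y f z :
  Pr f (evZ z) = Pr f (evI (evY true) (evZ z)) + Pr f (evI (evY false) (evZ z)).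
Proof.
rewrite !Pr_YZ (Pr_evI_evZ f xpredT) big_mkcond sum_bool_pair /=; ring.
Qed.

Lemma Pr_Z_Ys f z :
  Pr f (evZ z) = Pr f (evI (evYs true) (evZ z)) + Pr f (evI (evYs false) (evZ z)).
Proof. by rewrite !Pr_YsZ (Pr_evI_evZ f xpredT) big_mkcond sum_bool_pair /= !addrA. Qed.

Lemma sum_law f : \sum_t f t = \sum_z Pr f (evZ z).
Proof. exact: (Pr_sumZ f xpredT). Qed.

Section Conditional.
Variable f : law R Z.
Hypothesis f_ge0 : forall t, 0 <= f t.

Lemma Pr_ge0 A : 0 <= Pr f A.
Proof. exact: sumr_ge0. Qed.

Lemma Pr_evI_le A B : Pr f (evI A B) <= Pr f B.
Proof.
rewrite /Pr [leLHS]big_mkcond [leRHS]big_mkcond; apply: ler_sum => t _.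
by rewrite /evI /=; case: (A t); case: (B t).
Qed.

Lemma Pr_evI_cPr A B : Pr f (evI A B) = cPr f A B * Pr f B.
Proof.
have [PrB0|PrB_neq0] := eqVneq (Pr f B) 0; last by rewrite divfK.
by apply/eqP; rewrite PrB0 mulr0 eq_le Pr_ge0 andbT -PrB0 Pr_evI_le.
Qed.

Lemma cPr_itv A B : 0 <= cPr f A B <= 1.
Proof.
rewrite /cPr divr_ge0 ?Pr_ge0 //=.
have [PrB0|PrB_neq0] := eqVneq (Pr f B) 0; first by rewrite PrB0 invr0 mulr0.
by rewrite ler_pdivrMr ?mul1r ?Pr_evI_le // lt_def PrB_neq0 Pr_ge0.
Qed.

End Conditional.

Section Exclusion.
Variable f : law R Z.
Hypotheses (f_pmf : is_pmf f) (f_excl : exclusion f).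

Lemma flip_mass_exclusion ys z :
  f ((ys, ~~ ys), z) = mis f ys * Pr f (evI (evYs ys) (evZ z)).
Proof.
have f_ge0 := f_pmf.1.
rewrite -Pr_flipZ Pr_evI_cPr // -/(mis_x f ys z).
have [->|PrYsZ_neq0] := eqVneq (Pr f (evI (evYs ys) (evZ z))) 0; first by rewrite !mulr0.
by rewrite f_excl // lt_def PrYsZ_neq0 Pr_ge0.
Qed.

Lemma Pr_Y1Z_exclusion z :
  Pr f (evI (evY true) (evZ z)) = (1 - mis f true) * Pr f (evI (evYs true) (evZ z))
                                  + mis f false * Pr f (evI (evYs false) (evZ z)).
Proof.
rewrite Pr_YZ -(flip_mass_exclusion false z) mulrBl mul1r.
by rewrite -(flip_mass_exclusion true z) Pr_YsZ addrK.
Qed.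

Lemma p_affine_pstar z : in_supp f z ->
  p f z = mis f false + (1 - mis f true - mis f false) * pstar f z.
Proof.
move=> z_supp; have f_ge0 := f_pmf.1.
have PrZ_neq0 : Pr f (evZ z) != 0 by rewrite gt_eqF.
apply: (mulIf PrZ_neq0); rewrite -Pr_evI_cPr // Pr_Y1Z_exclusion.
have PrYs1Z : Pr f (evI (evYs true) (evZ z)) = pstar f z * Pr f (evZ z).
  exact: Pr_evI_cPr.
have PrYs0Z : Pr f (evI (evYs false) (evZ z)) = (1 - pstar f z) * Pr f (evZ z).
  by rewrite mulrBl mul1r -PrYs1Z [Pr f (evZ z)]Pr_Z_Ys; ring.
rewrite PrYs1Z PrYs0Z; ring.
Qed.

End Exclusion.

Section Extremes.
Variable f : law R Z.

Lemma p_low_ge c : c <= 1 -> (forall z, in_supp f z -> c <= p f z) -> c <= p_low f.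
Proof.
move=> c_le1 c_le_p; rewrite /p_low; elim/big_ind: _ => // x y cx cy.
by rewrite le_min cx cy.
Qed.

Lemma p_up_le c : 0 <= c -> (forall z, in_supp f z -> p f z <= c) -> p_up f <= c.
Proof.
move=> c_ge0 p_le_c; rewrite /p_up; elim/big_ind: _ => // x y xc yc.
by rewrite ge_max xc yc.
Qed.

Lemma p_low_le z : in_supp f z -> p_low f <= p f z.
Proof. by move=> z_supp; rewrite /p_low (bigD1 z) //= ge_min lexx. Qed.

Lemma p_up_ge z : in_supp f z -> p f z <= p_up f.
Proof. by move=> z_supp; rewrite /p_up (bigD1 z) //= le_max lexx. Qed.

End Extremes.

Lemma affine_preimage_bounds (a b lo up s : R) :
  0 <= a -> 0 <= b -> a + b <= 1 -> 0 <= s <= 1 -> b <= lo < 1 -> 0 < up <= 1 - a ->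
  (b + (1 - a - b) * s - lo) / (1 - lo) <= s <= (b + (1 - a - b) * s) / up.
Proof.
move=> a_ge0 b_ge0 ab_le1 /andP[s_ge0 s_le1] /andP[b_le_lo lo_lt1] /andP[up_gt0 up_le].
rewrite ler_pdivrMr ?subr_gt0 // ler_pdivlMr //; apply/andP; split; nra.
Qed.

Theorem pstar_bounds f z :
  is_pmf f -> exclusion f -> degree_misreport f -> boundary f -> in_supp f z ->
  L1 f z <= pstar f z <= U1 f z.
Proof.
move=> f_pmf f_excl ab_le1 [p_up_gt0 p_low_lt1] z_supp.
have /andP[a_ge0 a_le1] : 0 <= mis f true <= 1 := cPr_itv f_pmf.1 _ _.
have /andP[b_ge0 b_le1] : 0 <= mis f false <= 1 := cPr_itv f_pmf.1 _ _.
have p_itv z' : in_supp f z' -> mis f false <= p f z' <= 1 - mis f true.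
  move=> z'_supp; rewrite p_affine_pstar //.
  have /andP[s_ge0 s_le1] : 0 <= pstar f z' <= 1 := cPr_itv f_pmf.1 _ _.
  by apply/andP; split; rewrite /degree_misreport in ab_le1; nra.
rewrite /L1 /U1 p_affine_pstar //; apply: affine_preimage_bounds => //.
- exact: cPr_itv f_pmf.1 _ _.
- rewrite p_low_lt1 andbT p_low_ge // => z' /p_itv /andP[] //.
- rewrite p_up_gt0 p_up_le ?subr_ge0 // => z' /p_itv /andP[] //.
Qed.

Lemma same_observed_Pr_Z g f : same_observed g f -> forall z, Pr g (evZ z) = Pr f (evZ z).
Proof. by move=> gf z; rewrite !Pr_Z_Y !gf. Qed.

Lemma same_observed_p g f : same_observed g f -> forall z, p g z = p f z.
Proof. by move=> gf z; rewrite /p /cPr (same_observed_Pr_Z gf) (gf true z). Qed.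

Lemma same_observed_boundary g f : same_observed g f -> boundary f -> boundary g.
Proof.
move=> gf; have supp_gf z : (0 < Pr g (evZ z)) = (0 < Pr f (evZ z)).
  by rewrite (same_observed_Pr_Z gf).
by rewrite /boundary /p_low /p_up !(eq_big _ _ supp_gf (fun z _ => same_observed_p gf z)).
Qed.

Definition flip_rate (a b : R) (ys : bool) : R := if ys then a else b.

Definition latent_prob f (a b : R) z : R := (p f z - b) / (1 - a - b).

Definition latent_mass f (a b : R) ys z : R :=
  Pr f (evZ z) * (if ys then latent_prob f a b z else 1 - latent_prob f a b z).

(* Y* is drawn with Pr(Y* = 1 | z) = latent_prob and then misreported with
   probability a from 1 and b from 0; latent_prob inverts the relation
   p = b + (1 - a - b) p*, so that (Y, Z) keeps the law it has under f. *)
Definition misreport_law f (a b : R) : law R Z := fun t =>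
  let: ((ys, y), z) := t in
  latent_mass f a b ys z * (if y == ys then 1 - flip_rate a b ys else flip_rate a b ys).

Definition valid_rates f (a b : R) : Prop :=
  [/\ 0 <= a, 0 <= b, a + b < 1 & forall z, in_supp f z -> b <= p f z <= 1 - a].

Section Misreport.
Variables (f : law R Z) (a b : R).
Hypotheses (f_pmf : is_pmf f) (ab_valid : valid_rates f a b).

Local Notation M := (misreport_law f a b).

Lemma misreport_Pr_YsZ ys z : Pr M (evI (evYs ys) (evZ z)) = latent_mass f a b ys z.
Proof. by rewrite Pr_YsZ; case: ys => /=; ring. Qed.

Lemma misreport_flip ys z : M ((ys, ~~ ys), z) = flip_rate a b ys * latent_mass f a b ys z.
Proof. by case: ys => /=; rewrite mulrC. Qed.

Lemma rate_gap_gt0 : 0 < 1 - a - b.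
Proof. by case: ab_valid => *; lra. Qed.

Lemma flip_rate_itv ys : 0 <= flip_rate a b ys <= 1.
Proof. by case: ab_valid => *; case: ys => /=; apply/andP; split; lra. Qed.

Lemma misreport_observed : same_observed M f.
Proof.
have d_neq0 : 1 - a - b != 0 := lt0r_neq0 rate_gap_gt0.
have PrY1Z z : Pr f (evI (evY true) (evZ z)) = p f z * Pr f (evZ z).
  exact: Pr_evI_cPr f_pmf.1 _ _.
move=> y z; rewrite Pr_YZ /= /latent_mass /latent_prob; case: y => /=.
  by rewrite PrY1Z; field.
rewrite (_ : Pr f (evI (evY false) (evZ z)) = (1 - p f z) * Pr f (evZ z)).
  by field.
by rewrite mulrBl mul1r -PrY1Z [Pr f (evZ z)]Pr_Z_Y; ring.
Qed.

Lemma latent_mass_ge0 ys z : 0 <= latent_mass f a b ys z.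
Proof.
have [z_supp|PrZ_le0] := ltP 0 (Pr f (evZ z)); last first.
  rewrite /latent_mass (_ : Pr f (evZ z) = 0) ?mul0r //.
  by apply/le_anti; rewrite PrZ_le0 (Pr_ge0 f_pmf.1).
have [_ _ _ /(_ z z_supp)/andP[b_le_p p_le]] := ab_valid.
apply: mulr_ge0; first exact: ltW.
rewrite /latent_prob; case: ys => /=; last rewrite subr_ge0.
  by apply: divr_ge0; [rewrite subr_ge0 | exact: ltW rate_gap_gt0].
by rewrite ler_pdivrMr ?rate_gap_gt0 // mul1r; lra.
Qed.

Lemma misreport_pmf : is_pmf M.
Proof.
split.
  case=> [[ys y] z] /=; apply: mulr_ge0; first exact: latent_mass_ge0.
  by have /andP[r_ge0 r_le1] := flip_rate_itv ys; case: (y == ys); rewrite ?subr_ge0.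
rewrite sum_law -f_pmf.2 sum_law; apply: eq_bigr => z _.
exact: same_observed_Pr_Z misreport_observed z.
Qed.

Lemma misreport_mis ys : mis M ys =
  flip_rate a b ys * ((\sum_z latent_mass f a b ys z) / \sum_z latent_mass f a b ys z).
Proof.
rewrite /mis /cPr Pr_flip Pr_sumZ.
under eq_bigr do rewrite misreport_flip.
under [X in _ / X]eq_bigr do rewrite misreport_Pr_YsZ.
by rewrite -big_distrr mulrA.
Qed.

Lemma misreport_mis_le ys : mis M ys <= flip_rate a b ys.
Proof.
have /andP[rate_ge0 _] := flip_rate_itv ys.
rewrite misreport_mis ler_piMr //.
set S := \sum_z _; have [->|S_neq0] := eqVneq S 0; first by rewrite invr0 mulr0.
by rewrite divff.
Qed.

Lemma misreport_exclusion : exclusion M.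
Proof.
move=> z ys; rewrite misreport_Pr_YsZ => L_gt0.
have S_neq0 : \sum_z' latent_mass f a b ys z' != 0.
  rewrite lt0r_neq0 // (bigD1 z) //=; apply: lt_le_trans L_gt0 _.
  by rewrite lerDl sumr_ge0 // => z' _; apply: latent_mass_ge0.
rewrite /mis_x /cPr Pr_flipZ misreport_flip misreport_Pr_YsZ misreport_mis.
by rewrite -mulrA !divff ?mulr1 // lt0r_neq0.
Qed.

Lemma misreport_degree : degree_misreport M.
Proof.
apply: le_trans (lerD (misreport_mis_le true) (misreport_mis_le false)) _.
by case: ab_valid => *; rewrite /=; lra.
Qed.

Lemma misreport_pstar z : in_supp f z -> pstar M z = latent_prob f a b z.
Proof.
move=> z_supp; rewrite /pstar /cPr (misreport_Pr_YsZ true z).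
rewrite (same_observed_Pr_Z misreport_observed) /latent_mass /=.
by rewrite mulrAC divff ?mul1r // lt0r_neq0.
Qed.

Lemma misreport_admissible :
  boundary f -> [/\ is_pmf M, exclusion M, degree_misreport M & boundary M].
Proof.
split; [exact: misreport_pmf | exact: misreport_exclusion | exact: misreport_degree |].
exact: same_observed_boundary misreport_observed _.
Qed.

End Misreport.

Lemma lower_rates_valid f : is_pmf f -> boundary f -> valid_rates f 0 (p_low f).
Proof.
move=> f_pmf [_ p_low_lt1].
have p_itv z : 0 <= p f z <= 1 := cPr_itv f_pmf.1 _ _.
split; rewrite ?add0r ?subr0 //.
  by apply: p_low_ge => // z _; have /andP[] := p_itv z.
by move=> z z_supp; rewrite p_low_le //; have /andP[] := p_itv z.
Qed.

Lemma upper_rates_valid f : is_pmf f -> boundary f -> valid_rates f (1 - p_up f) 0.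
Proof.
move=> f_pmf [p_up_gt0 _].
have p_itv z : 0 <= p f z <= 1 := cPr_itv f_pmf.1 _ _.
split; rewrite ?addr0 ?subKr //.
- by rewrite subr_ge0; apply: p_up_le => // z _; have /andP[] := p_itv z.
- by rewrite ltrBlDr ltrDl.
- by move=> z z_supp; rewrite p_up_ge ?andbT //; have /andP[] := p_itv z.
Qed.

End Probabilities.

Theorem proposition1 (R : realFieldType) (Xt : Type) (Z : finType)
  (P : Xt -> law R Z) :
  admissible P ->
  forall (xt : Xt) (z : Z), in_supp (P xt) z ->
    (L1 (P xt) z <= pstar (P xt) z <= U1 (P xt) z)
    /\ (exists Q : Xt -> law R Z,
          [/\ admissible Q, (forall xt', same_observed (Q xt') (P xt'))
            & pstar (Q xt) z = L1 (P xt) z])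
    /\ (exists Q : Xt -> law R Z,
          [/\ admissible Q, (forall xt', same_observed (Q xt') (P xt'))
            & pstar (Q xt) z = U1 (P xt) z]).
Proof.
move=> adm xt z z_supp; have [f_pmf f_excl f_deg f_bd] := adm xt.
split; first exact: pstar_bounds.
split.
  exists (fun x => misreport_law (P x) 0 (p_low (P x))); split.
  - move=> x; have [x_pmf _ _ x_bd] := adm x.
    exact: misreport_admissible x_pmf (lower_rates_valid x_pmf x_bd) x_bd.
  - move=> x; have [x_pmf _ _ x_bd] := adm x.
    exact: misreport_observed x_pmf (lower_rates_valid x_pmf x_bd).
  - rewrite (misreport_pstar f_pmf (lower_rates_valid f_pmf f_bd)) //.
    by rewrite /latent_prob /L1 subr0.
exists (fun x => misreport_law (P x) (1 - p_up (P x)) 0); split.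
- move=> x; have [x_pmf _ _ x_bd] := adm x.
  exact: misreport_admissible x_pmf (upper_rates_valid x_pmf x_bd) x_bd.
- move=> x; have [x_pmf _ _ x_bd] := adm x.
  exact: misreport_observed x_pmf (upper_rates_valid x_pmf x_bd).
- rewrite (misreport_pstar f_pmf (upper_rates_valid f_pmf f_bd)) //.
  by rewrite /latent_prob /U1 !subr0 subKr.
Qed.
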